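(* Let $(Q,P)$ be a weakly quasi-lattice ordered group and let $\Lambda$ be a $P$-graph with $\mathrm{FA}(\Lambda)\neq\emptyset$. For any $\lambda\in\Lambda$, the following are equivalent: (1) $\lambda\in\mathrm{FA}(\Lambda)$; (2) the set $Z(\lambda)=\{x\in\mathcal{F}(\Lambda):\lambda\in x\}$ is compact.
   Context: $(Q,P)$ weakly quasi-lattice ordered: $Q$ a discrete group, $P\subseteq Q$ a subsemigroup containing the identity $e$ with $P\cap P^{-1}=\{e\}$, and, with $p\le r$ meaning $pq=r$ for some $q\in P$, any two elements of $P$ with a common upper bound have a least common upper bound. A $P$-graph is a countable small category $\Lambda$ (range/source $r,s$) with a functor $d:\Lambda\to P$ with unique factorisation (if $d(\lambda)=pq$ there are unique $\mu,\nu$ with $\lambda=\mu\nu$, $d(\mu)=p$, $d(\nu)=q$). Write $\lambda\Lambda=\{\lambda\mu: s(\lambda)=r(\mu)\}$, $\mu\preceq\lambda$ iff $\lambda\in\mu\Lambda$. $\mathrm{FA}(\Lambda)$ is the set of $\lambda$ such that for all $\mu\in\lambda\Lambda,\nu\in\Lambda$ there is a finite $J\subseteq\Lambda$ with $\mu\Lambda\cap\nu\Lambda=\bigcup_{\kappa\in J}\kappa\Lambda$. A filter is a nonempty subset $x\subseteq\Lambda$ that is hereditary ($\lambda\preceq\mu\in x\Rightarrow\lambda\in x$) and directed ($\mu,\nu\in x$ implies some $\lambda\in x$ with $\mu,\nu\preceq\lambda$); $\mathcal{F}(\Lambda)$ is the set of filters, with the subspace topology from $\mathcal{P}(\Lambda)$,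 which carries the product topology from $\{0,1\}^\Lambda$ (basis: $\{x: K_1\subseteq x\subseteq\Lambda\setminus K_2\}$ for finite $K_1,K_2$). *)

(* the topology on P(Lambda) is the product
   (pointwise) topology {ptws Mor -> bool}, bool being discrete. *)
From HB Require Import structures.
From mathcomp Require Import all_boot all_order all_algebra.
From mathcomp Require Import all_classical all_reals all_analysis.

Set Implicit Arguments.
Unset Strict Implicit.
Unset Printing Implicit Defensive.

Local Open Scope classical_set_scope.

Definition Ple {Q : Type} (mul : Q -> Q -> Q) (P : Q -> Prop) (p r : Q) : Prop :=
  exists q, P q /\ mul p q = r.

Record wqlo_group := WQLOGroup {
  Q :> Type;
  gmul : Q -> Q -> Q;
  gone : Q;
  ginv : Q -> Q;
  gmulA : forall a b c, gmul a (gmul b c) = gmul (gmul a b) c;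
  gmul1q : forall a, gmul gone a = a;
  gmulq1 : forall a, gmul a gone = a;
  gmulVq : forall a, gmul (ginv a) a = gone;
  gmulqV : forall a, gmul a (ginv a) = gone;
  Pos : Q -> Prop;
  Pos1 : Pos gone;
  PosM : forall a b, Pos a -> Pos b -> Pos (gmul a b);
  Pos_cap_inv : forall a, Pos a -> Pos (ginv a) -> a = gone;
  Pos_wqlo : forall p q, Pos p -> Pos q ->
    (exists r, Pos r /\ Ple gmul Pos p r /\ Ple gmul Pos q r) ->
    exists l, [/\ Pos l, Ple gmul Pos p l, Ple gmul Pos q l &
      forall r, Pos r -> Ple gmul Pos p r -> Ple gmul Pos q r ->
        Ple gmul Pos l r]
}.

(* A countable small category (objects Obj, morphisms Mor, range/source,
   identities, composition comp mu nu = "mu nu", defined when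
   src mu = rng nu) with a degree functor d : Mor -> P having the unique
   factorisation property. *)
Record Pgraph (G : wqlo_group) := PGraph {
  Obj : Type;
  Mor :> Type;
  rng : Mor -> Obj;
  src : Mor -> Obj;
  idm : Obj -> Mor;
  comp : Mor -> Mor -> Mor;
  Mor_countable : exists f : Mor -> nat, injective f;
  src_idm : forall v, src (idm v) = v;
  rng_idm : forall v, rng (idm v) = v;
  src_comp : forall m n, src m = rng n -> src (comp m n) = src n;
  rng_comp : forall m n, src m = rng n -> rng (comp m n) = rng m;
  comp_idl : forall m, comp (idm (rng m)) m = m;
  comp_idr : forall m, comp m (idm (src m)) = m;
  compA : forall a b c, src a = rng b -> src b = rng c ->
    comp a (comp b c) = comp (comp a b) c;
  deg : Mor -> G;
  deg_Pos : forall m, Pos (deg m);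
  deg_idm : forall v, deg (idm v) = gone G;
  deg_comp : forall m n, src m = rng n -> deg (comp m n) = gmul (deg m) (deg n);
  unique_factorisation : forall l (p q : G), Pos p -> Pos q ->
    deg l = gmul p q ->
    exists m n, [/\ src m = rng n, l = comp m n, deg m = p, deg n = q &
      forall m' n', src m' = rng n' -> l = comp m' n' -> deg m' = p ->
        deg n' = q -> m' = m /\ n' = n]
}.

Section PgraphNotions.
Variables (G : wqlo_group) (L : Pgraph G).

Definition ext (l : L) : set L :=
  [set a | exists m : L, src l = rng m /\ a = comp l m].

Definition prec (m l : L) : Prop := ext m l.

Definition FA : set L :=
  [set l | forall m n : L, ext l m ->
     exists J : set L, finite_set J /\ ext m `&` ext n = \bigcup_(k in J) ext k].

(* filters: subsets of Lambda represented by their indicator Mor -> bool *)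
Definition is_filter (x : L -> bool) : Prop :=
  [/\ exists l, x l,
      (forall l m, prec l m -> x m -> x l) &
      (forall m n, x m -> x n -> exists l, [/\ x l, prec m l & prec n l])].

Definition filters : set {ptws L -> bool} := [set x | is_filter x].

Definition Zset (l : L) : set {ptws L -> bool} := [set x | is_filter x /\ x l].

End PgraphNotions.

Arguments ext {G L} l.
Arguments prec {G L} m l.
Arguments FA {G} L.
Arguments is_filter {G L} x.
Arguments filters {G} L.
Arguments Zset {G L} l.

From Pilot Require Import Defs.
From HB Require Import structures.
From mathcomp Require Import all_boot all_order all_algebra.
From mathcomp Require Import all_classical all_reals all_analysis.
From mathcomp Require Import finmap.

Local Open Scope classical_set_scope.

(* P(Λ) = {0,1}^Λ is compact by Tychonoff, so for (1) => (2) it suffices that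
   Z(λ) be closed.  A limit x of filters containing λ contains λ and is
   hereditary.  It is directed because, for μ ∈ λΛ and ν in x, some filter
   agrees with x on μ, ν and the finite J with μΛ ∩ νΛ = ⋃_{κ∈J} κΛ; that
   filter contains a common extension of μ and ν, hence some κ ∈ J, and then
   so does x.  For (2) => (1), the open sets {x | κ ∈ x}, κ ∈ μΛ ∩ νΛ, cover
   the compact set of filters in Z(λ) containing μ and ν; a finite subcover is
   the required J, because every ξ ∈ μΛ ∩ νΛ lies in the principal filter
   {η | η ≼ ξ}. *)

Section PointwiseBool.
Context {T : Type}.
Local Notation X := {ptws T -> bool}.

(* [compact_cover] is only available for pointed spaces. *)
HB.instance Definition _ := isPointed.Build X (fun _ => true).

Lemma nbhs_ptws_coord (x : X) (i : T) : nbhs x [set y : X | y i = x i].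
Proof.
apply: (@proj_continuous {classic T} (fun _ => bool) i x [set x i]).
exact: discrete_set1.
Qed.

Lemma nbhs_ptws_agree (x : X) (J : set T) : finite_set J ->
  nbhs x [set y : X | forall i, J i -> y i = x i].
Proof.
move=> /(@finite_fsetP {classic T}) [D ->].
have := @filter_bigI X {classic T} D (fun i => [set y : X | y i = x i])
  (nbhs x).
move=> /(_ (nbhs_filter x) (fun i _ => nbhs_ptws_coord x i)).
by apply: filterS => y /= yD i Di; apply: yD.
Qed.

Lemma closure_ptws_agree (A : set X) (x : X) (J : set T) :
  closure A x -> finite_set J -> exists2 y, A y & forall i, J i -> y i = x i.
Proof. by move=> Ax /(nbhs_ptws_agree x) /Ax [y [Ay yJ]]; exists y. Qed.

Lemma open_ptws_coord (i : T) : open [set y : X | y i].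
Proof.
rewrite openE => x xi.
by apply: filterS (nbhs_ptws_coord x i) => y /= ->.
Qed.

Lemma closed_ptws_coord (i : T) : closed [set y : X | y i].
Proof.
by move=> x /(_ _ (nbhs_ptws_coord x i)) [y [yi yx]] /=; rewrite -yx.
Qed.

Lemma compact_ptws_bool : compact [set: X].
Proof.
have := @tychonoff {classic T} (fun _ => bool) (fun _ => setT)
  (fun _ => bool_compact).
by congr compact; apply/seteqP.
Qed.

End PointwiseBool.

Arguments closure_ptws_agree {T A x J}.

Section FilterSpace.
Variables (G : wqlo_group) (L : Pgraph G).
Local Notation X := {ptws L -> bool}.

Lemma prec_refl (a : L) : prec a a.
Proof. by exists (idm (src a)); rewrite rng_idm comp_idr. Qed.

Lemma prec_trans (a b c : L) : prec a b -> prec b c -> prec a c.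
Proof.
move=> [u [au ->]] [v [uv ->]].
have uv' : src u = rng v by rewrite -uv src_comp.
by exists (Defs.comp u v); rewrite rng_comp // Defs.compA.
Qed.

Definition principal_filter (a : L) : L -> bool := fun b => `[< prec b a >].

Lemma is_filter_principal (a : L) : is_filter (principal_filter a).
Proof.
split.
- by exists a; apply/asboolP; exact: prec_refl.
- by move=> b c bc /asboolP ca; apply/asboolP; exact: prec_trans bc ca.
- move=> b c /asboolP ba /asboolP ca; exists a.
  by split=> //; apply/asboolP; exact: prec_refl.
Qed.

Lemma closure_filters_hereditary (x : X) : closure (filters L) x ->
  forall a b, prec a b -> x b -> x a.
Proof.
move=> clx a b ab xb.
have fab : finite_set [set a; b].
  by rewrite finite_setU; split; exact: finite_set1.
have [y [_ y_her _] yab] := closure_ptws_agree clx fab.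
by rewrite -yab; [apply: (y_her a b ab); rewrite yab //; right | left].
Qed.

Lemma closure_Zset_directed (l : L) (x : X) : FA L l -> closure (Zset l) x ->
  forall mu nu, prec l mu -> x mu -> x nu ->
  exists k, [/\ x k, prec mu k & prec nu k].
Proof.
move=> l_FA clx mu nu l_mu xmu xnu.
have [J [fJ mu_nu_J]] := l_FA mu nu l_mu.
have fJ' : finite_set (J `|` [set mu; nu]).
  by rewrite !finite_setU; do ?split => //; exact: finite_set1.
have [y [[_ y_her y_dir] _] yJ] := closure_ptws_agree clx fJ'.
have [a [ya mu_a nu_a]] : exists a, [/\ y a, prec mu a & prec nu a].
  by apply: y_dir; rewrite yJ //; right; [left | right].
have : (\bigcup_(k in J) ext k) a by rewrite -mu_nu_J.
case=> k Jk k_a.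
have : (ext mu `&` ext nu) k.
  by rewrite mu_nu_J; exists k => //; exact: prec_refl.
case=> mu_k nu_k; exists k; split=> //.
by rewrite -yJ; [exact: y_her k_a ya | left].
Qed.

Lemma closed_Zset (l : L) : FA L l -> closed (Zset l : set X).
Proof.
move=> l_FA x clx.
have clx_filters : closure (filters L) x.
  by apply: closureS clx => y [].
have x_dir := @closure_Zset_directed l x l_FA clx.
have xl : x l.
  have [y [_ yl] yx] := closure_ptws_agree clx (finite_set1 l).
  by rewrite -yx.
split=> //; split; first by exists l.
  exact: closure_filters_hereditary clx_filters.
move=> m n xm xn.
have [k1 [xk1 l_k1 m_k1]] := x_dir _ _ (prec_refl l) xl xm.
have [k2 [xk2 k1_k2 n_k2]] := x_dir _ _ l_k1 xk1 xn.
by exists k2; split=> //; exact: prec_trans m_k1 k1_k2.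
Qed.

Lemma compact_Zset (l : L) : FA L l -> compact (Zset l : set X).
Proof.
move=> l_FA.
by apply: subclosed_compact (@closed_Zset l l_FA) compact_ptws_bool _.
Qed.

Lemma FA_of_compact_Zset (l : L) : compact (Zset l : set X) -> FA L l.
Proof.
move=> cZ m n l_m.
pose K := Zset l `&` [set y : X | y m] `&` [set y : X | y n].
have cK : compact K.
  exact: compact_closedI (compact_closedI cZ (closed_ptws_coord m))
    (closed_ptws_coord n).
pose D : set {classic L} := ext m `&` ext n.
move: cK; rewrite compact_cover => /(_ _ D (fun k => [set y : X | y k])).
case=> [k _|y [[[[_ _ y_dir] _] ym] yn]|D' D'D cov].
    exact: open_ptws_coord.
  by have [k [yk mk nk]] := y_dir m n ym yn; exists k.
exists [set` D']; split; first exact: (@finite_fset {classic L} D').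
apply/seteqP; split=> [a [m_a n_a]|a [k D'k k_a]].
- have Ka : K (principal_filter a).
    split; [split; [split|]|]; first exact: is_filter_principal.
    + by apply/asboolP; exact: prec_trans l_m m_a.
    + exact/asboolP.
    + exact/asboolP.
  by have [k D'k /asboolP ka] := cov _ Ka; exists k.
- have [m_k n_k] : D k by move/D'D: D'k; rewrite in_setE.
  by split; [exact: prec_trans m_k k_a | exact: prec_trans n_k k_a].
Qed.

End FilterSpace.

Theorem lemma4p8 (G : wqlo_group) (L : Pgraph G) :
  FA L !=set0 ->
  forall l : L,
    FA L l <-> @compact (subspace (filters L)) (Zset l).
Proof.
move=> _ l.
have Zset_filters : Zset l `&` filters L = Zset l by apply/setIidl => y [].
rewrite -Zset_filters compact_subspaceIP Zset_filters.
by split; [exact: compact_Zset | exact: FA_of_compact_Zset].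
Qed.
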